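(* There is no linear isometry $\phi:\ell^\infty\to\ell^\infty$ whose image is contained in $L(\mathbb{N}\cup\{\omega\})\cup\{0\}$. That is, the set of bounded real sequences having at most countably many accumulation points, together with $0$, does not contain an isometric copy of $\ell^\infty$.
   Context: $\ell^\infty$ is the Banach space of bounded real sequences with the sup norm. For $x\in\ell^\infty$, $L_x$ denotes the set of accumulation points (subsequential limits) of $x$. $\omega$ denotes the cardinality of $\mathbb{N}$. For a set $A$ of cardinalities, $L(A)=\{x\in\ell^\infty: |L_x|\in A\}$; so $L(\mathbb{N}\cup\{\omega\})$ is the set of $x\in\ell^\infty$ with $L_x$ finite or countably infinite. *)

From Stdlib Require Import Reals.
Open Scope R_scope.

Definition bounded_seq (x : nat -> R) : Prop :=
  exists M : R, forall n : nat, Rabs (x n) <= M.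

Definition is_supnorm (x : nat -> R) (s : R) : Prop :=
  is_lub (fun r => exists n : nat, r = Rabs (x n)) s.

Definition acc_point (x : nat -> R) (a : R) : Prop :=
  forall eps : R, 0 < eps -> forall N : nat, exists n : nat, (N <= n)%nat /\ Rabs (x n - a) < eps.

Definition at_most_countable (A : R -> Prop) : Prop :=
  exists f : R -> nat, forall a b : R, A a -> A b -> f a = f b -> a = b.

(* x \in L(N \cup {omega}) : the set L_x is finite or countably infinite. *)
Definition in_L_countable (x : nat -> R) : Prop :=
  at_most_countable (acc_point x).

(* phi is a linear map l^infty -> l^infty (conditions only on bounded inputs). *)
Definition linear_on_linf (phi : (nat -> R) -> (nat -> R)) : Prop :=
  (forall x, bounded_seq x -> bounded_seq (phi x)) /\
  (forall x y : nat -> R, bounded_seq x -> bounded_seq y -> forall a b : R,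
      phi (fun n => a * x n + b * y n) = (fun n => a * phi x n + b * phi y n)).

Definition isometry_on_linf (phi : (nat -> R) -> (nat -> R)) : Prop :=
  forall x, bounded_seq x -> forall s, is_supnorm x s -> is_supnorm (phi x) s.

(* Proof idea, a Cantor-type diagonal argument.  Let r_j(n) = +-1 be the j-th
   binary digit of n read as a sign (so the r_j realise every finite pattern of
   signs), let c_j = 4^-(j+1) and x = 2 + sum_j c_j r_j.  Suppose phi is a linear
   isometry whose values have countably many accumulation points or vanish, and
   put y = phi x; y <> 0 since phi is isometric.  List the absolute values of the
   accumulation points of y and of the terms of y as one sequence t, and choose
   greedy signs sigma_j so that V = 2 + sum_j c_j sigma_j keeps distance >= c_i/2
   from every t_i.  The finite sum z_N = 2 + sum_(j<N) c_j sigma_j r_j has norm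
   peak N = 2 + sum_(j<N) c_j, so |phi z_N| nearly reaches peak N at some k; an
   alignment inequality shows that then |y_k| is close to V.  As |y_k| is some
   t_i, these k are arbitrarily large, so V or -V is an accumulation point a of
   y; but |a| = V is itself some t_i, contradicting the choice of V. *)

From Stdlib Require Import Reals Lra Lia.
From Stdlib Require Import Classical ClassicalEpsilon FunctionalExtensionality.
Open Scope R_scope.

(* Absolute-value bounds as two-sided inequalities, the form lra consumes. *)
Lemma Rabs_le_iff (a b : R) : Rabs a <= b <-> -b <= a <= b.
Proof. unfold Rabs; destruct (Rcase_abs a); split; intros; lra. Qed.

Lemma Rabs_lt_iff (a b : R) : Rabs a < b <-> -b < a < b.
Proof. unfold Rabs; destruct (Rcase_abs a); split; intros; lra. Qed.

(* Weights c_j = 4^-(j+1), their tails tail N = sum_(j>=N) c_j = 4^-N / 3, and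
   weighted partial sums psum e N = sum_(j<N) c_j e_j. *)
Definition c (j : nat) : R := (/4) ^ S j.
Definition tail (N : nat) : R := /3 * (/4) ^ N.
Fixpoint psum (e : nat -> R) (N : nat) : R :=
  match N with O => 0 | S N => psum e N + c N * e N end.

Lemma c_pos (j : nat) : 0 < c j.
Proof. apply pow_lt; lra. Qed.

Lemma tail_pos (N : nat) : 0 < tail N.
Proof. unfold tail; pose proof (pow_lt (/4) N ltac:(lra)); lra. Qed.

Lemma tail0 : tail 0 = /3.
Proof. unfold tail; simpl; lra. Qed.

Lemma tail_S (N : nat) : tail N = c N + tail (S N).
Proof. unfold tail, c; simpl; field. Qed.

Lemma tail_S_third (N : nat) : tail (S N) = c N / 3.
Proof. unfold tail, c; simpl; field. Qed.

Lemma c_antitone (i i' : nat) : (i <= i')%nat -> c i' <= c i.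
Proof.
  induction 1 as [|m _ IH]; [lra|].
  change (c (S m)) with (/4 * c m). pose proof (c_pos m); lra.
Qed.

Lemma tail_small (d : R) : 0 < d -> exists N, tail N < d.
Proof.
  intro Hd.
  destruct (pow_lt_1_zero (/4) ltac:(rewrite Rabs_pos_eq; lra) d Hd) as [N HN].
  exists N. specialize (HN N (le_n N)).
  rewrite Rabs_pos_eq in HN by (apply pow_le; lra).
  unfold tail; pose proof (pow_lt (/4) N ltac:(lra)); lra.
Qed.

Lemma psum_ext (e e' : nat -> R) (N : nat) :
  (forall j, (j < N)%nat -> e j = e' j) -> psum e N = psum e' N.
Proof.
  induction N as [|N IH]; intro H; simpl; [reflexivity|].
  rewrite IH by (intros; apply H; lia). rewrite H by lia. reflexivity.
Qed.

Lemma psum_one (N : nat) : psum (fun _ => 1) N = tail 0 - tail N.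
Proof. induction N as [|N IH]; simpl; [lra|]. rewrite IH, (tail_S N); ring. Qed.

Lemma psum_bound (e : nat -> R) : (forall j, Rabs (e j) <= 1) ->
  forall N, Rabs (psum e N) <= psum (fun _ => 1) N.
Proof.
  intros He N; induction N as [|N IH]; simpl; [rewrite Rabs_R0; lra|].
  pose proof (He N) as HeN. pose proof (c_pos N).
  apply Rabs_le_iff in HeN; apply Rabs_le_iff in IH; apply Rabs_le_iff; nra.
Qed.

Lemma psum_window (e : nat -> R) : (forall j, Rabs (e j) <= 1) ->
  forall N M, (N <= M)%nat -> Rabs (psum e M - psum e N) <= tail N - tail M.
Proof.
  intros He N M; induction 1 as [|M _ IH]; [rewrite Rminus_diag, Rabs_R0; lra|].
  simpl. rewrite (tail_S M) in IH. pose proof (He M) as HeM. pose proof (c_pos M).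
  apply Rabs_le_iff in HeM; apply Rabs_le_iff in IH; apply Rabs_le_iff; nra.
Qed.

Lemma signed_series (e : nat -> R) : (forall j, Rabs (e j) <= 1) ->
  {S : R | forall N, Rabs (S - psum e N) <= tail N}.
Proof.
  intro He.
  assert (Hnest : forall N M, (N <= M)%nat ->
    psum e N - tail N <= psum e M - tail M /\ psum e M + tail M <= psum e N + tail N).
  { intros N M HNM. pose proof (psum_window e He N M HNM) as H.
    apply Rabs_le_iff in H; lra. }
  assert (Hlow_up : forall N M, psum e N - tail N <= psum e M + tail M).
  { intros N M. pose proof (Hnest N (max N M) ltac:(lia)).
    pose proof (Hnest M (max N M) ltac:(lia)). pose proof (tail_pos (max N M)); lra. }
  destruct (completeness (fun r => exists N, r = psum e N - tail N)) as [S [Hub Hlub]].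
  - exists (psum e 0 + tail 0); intros r [N ->]; apply Hlow_up.
  - exists (psum e 0 - tail 0); eauto.
  - exists S; intro N; apply Rabs_le_iff.
    assert (psum e N - tail N <= S) by (apply Hub; eauto).
    assert (S <= psum e N + tail N) by (apply Hlub; intros r [M ->]; apply Hlow_up).
    lra.
Qed.

Definition series (e : nat -> R) (He : forall j, Rabs (e j) <= 1) : R :=
  proj1_sig (signed_series e He).

Lemma series_approx (e : nat -> R) (He : forall j, Rabs (e j) <= 1) (N : nat) :
  Rabs (series e He - psum e N) <= tail N.
Proof. exact (proj2_sig (signed_series e He) N). Qed.

Definition sgn (b : bool) : R := if b then 1 else -1.

Lemma sgn_abs (b : bool) : Rabs (sgn b) <= 1.
Proof. destruct b; simpl; apply Rabs_le_iff; lra. Qed.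

(* Greedy signs for the level 2 + sum_j c_j sigma_j: at step i move away from t_i. *)
Definition away (t : nat -> R) (i : nat) (w : R) : bool :=
  if Rle_dec (t i) (2 + w) then true else false.

Fixpoint greedy_sum (t : nat -> R) (m : nat) : R :=
  match m with O => 0 | S m => greedy_sum t m + c m * sgn (away t m (greedy_sum t m)) end.

(* Diagonal step: every sequence t is avoided by some level V given by signs,
   with V at distance at least c_i / 2 from t_i, because the tail after step i
   is only c_i / 3. *)
Lemma avoiding_point (t : nat -> R) : exists (sigma : nat -> bool) (V : R),
  (forall N, Rabs (V - (2 + psum (fun j => sgn (sigma j)) N)) <= tail N) /\
  (forall i, c i / 2 <= Rabs (V - t i)).
Proof.
  set (sigma := fun j => away t j (greedy_sum t j)).
  assert (Hpsum : forall m, psum (fun j => sgn (sigma j)) m = greedy_sum t m)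
    by (induction m as [|m IH]; simpl; [|rewrite IH]; reflexivity).
  set (total := series (fun j => sgn (sigma j)) (fun j => sgn_abs _)).
  pose proof (series_approx (fun j => sgn (sigma j)) (fun j => sgn_abs _)) as Htotal.
  fold total in Htotal.
  exists sigma, (2 + total). split.
  - intro N. replace (2 + total - _) with (total - psum (fun j => sgn (sigma j)) N)
      by ring.
    apply Htotal.
  - intro i. specialize (Htotal (S i)).
    rewrite Hpsum, tail_S_third in Htotal. simpl in Htotal.
    apply Rabs_le_iff in Htotal. pose proof (c_pos i).
    unfold away in Htotal; destruct (Rle_dec (t i) (2 + greedy_sum t i));
      simpl in Htotal; unfold Rabs; destruct (Rcase_abs _); lra.
Qed.

Fixpoint bit (j n : nat) : bool :=
  match j with O => Nat.even n | S j => bit j (Nat.div2 n) end.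

Definition rademacher (j n : nat) : R := sgn (bit j n).

Lemma rademacher_abs (j n : nat) : Rabs (rademacher j n) <= 1.
Proof. apply sgn_abs. Qed.

Lemma bit_patterns (N : nat) : forall p : nat -> bool,
  exists n, forall j, (j < N)%nat -> bit j n = p j.
Proof.
  induction N as [|N IH]; intro p; [exists O; intros; lia|].
  destruct (IH (fun j => p (S j))) as [n Hn].
  exists (if p O then 2 * n else 2 * n + 1)%nat.
  intros [|j] Hj; cbn [bit].
  - destruct (p O); [apply Nat.even_even | apply Nat.even_odd].
  - replace (Nat.div2 _) with n by (destruct (p O);
      [rewrite Nat.div2_double | rewrite Nat.div2_odd']; reflexivity).
    apply Hn; lia.
Qed.

(* The finite sums z_N = 2 + sum_(j<N) c_j sigma_j r_j have sup norm peak N,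
   attained where r_j agrees with sigma_j for all j < N. *)
Definition peak (N : nat) : R := 2 + psum (fun _ => 1) N.

Lemma peak_ge_2 (N : nat) : 2 <= peak N.
Proof.
  pose proof (psum_bound (fun _ => 1) (fun _ => ltac:(cbv beta; rewrite Rabs_R1; lra)) N).
  pose proof (Rabs_pos (psum (fun _ => 1) N)). unfold peak; lra.
Qed.

Definition signed_sum (sigma : nat -> bool) (N n : nat) : R :=
  2 + psum (fun j => sgn (sigma j) * rademacher j n) N.

Lemma signed_sum_bound (sigma : nat -> bool) (N n : nat) :
  Rabs (signed_sum sigma N n) <= peak N.
Proof.
  assert (Hterm : forall j, Rabs (sgn (sigma j) * rademacher j n) <= 1).
  { intro j. rewrite Rabs_mult. pose proof (sgn_abs (sigma j)).
    pose proof (rademacher_abs j n). pose proof (Rabs_pos (sgn (sigma j))).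
    pose proof (Rabs_pos (rademacher j n)). nra. }
  pose proof (psum_bound _ Hterm N) as H.
  apply Rabs_le_iff in H; apply Rabs_le_iff; unfold signed_sum, peak; lra.
Qed.

Lemma signed_sum_peak (sigma : nat -> bool) (N : nat) :
  exists n0, Rabs (signed_sum sigma N n0) = peak N.
Proof.
  destruct (bit_patterns N sigma) as [n0 Hn0]. exists n0.
  unfold signed_sum. rewrite (psum_ext _ (fun _ => 1)).
  - apply Rabs_pos_eq. pose proof (peak_ge_2 N). unfold peak in *; lra.
  - intros j Hj. unfold rademacher. rewrite Hn0 by exact Hj.
    destruct (sigma j); simpl; ring.
Qed.

(* Alignment: if 2u + sum c_j sigma_j s_j (with |u|, |s_j| <= 1) is near
   eta * peak N, then each term is nearly extremal, so 2u + sum c_j s_j is near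
   eta * (2 + sum c_j sigma_j).  Termwise: |s - sigma| = 1 - sigma s. *)
Lemma signed_alignment (u : R) (s : nat -> R) (sigma : nat -> bool) (eta : bool) :
  Rabs u <= 1 -> (forall j, Rabs (s j) <= 1) -> forall N,
  Rabs (2 * u + psum s N - sgn eta * (2 + psum (fun j => sgn (sigma j)) N))
    <= peak N - sgn eta * (2 * u + psum (fun j => sgn (sigma j) * s j) N).
Proof.
  intros Hu Hs N. apply Rabs_le_iff in Hu. unfold peak.
  induction N as [|N IH]; simpl.
  - apply Rabs_le_iff; destruct eta; simpl; lra.
  - pose proof (Hs N) as HsN. apply Rabs_le_iff in HsN. pose proof (c_pos N).
    apply Rabs_le_iff in IH; apply Rabs_le_iff.
    destruct eta, (sigma N); simpl in *; nra.
Qed.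

Lemma alignment (u : R) (s : nat -> R) (sigma : nat -> bool) (N : nat) :
  Rabs u <= 1 -> (forall j, Rabs (s j) <= 1) ->
  Rabs (Rabs (2 * u + psum s N) - (2 + psum (fun j => sgn (sigma j)) N))
    <= peak N - Rabs (2 * u + psum (fun j => sgn (sigma j) * s j) N).
Proof.
  intros Hu Hs.
  set (q := 2 * u + psum s N).
  set (w := 2 + psum (fun j => sgn (sigma j)) N).
  set (q_sigma := 2 * u + psum (fun j => sgn (sigma j) * s j) N).
  assert (Hw : 0 <= w).
  { pose proof (psum_bound _ (fun j => sgn_abs (sigma j)) N) as H.
    rewrite psum_one, tail0 in H. apply Rabs_le_iff in H.
    pose proof (tail_pos N). unfold w; lra. }
  destruct (Rle_dec 0 q_sigma) as [Hpos | Hneg].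
  - pose proof (signed_alignment u s sigma true Hu Hs N) as H. simpl sgn in H.
    fold q w q_sigma in H. rewrite (Rabs_pos_eq q_sigma Hpos).
    pose proof (Rabs_triang_inv2 q w) as T. rewrite (Rabs_pos_eq w Hw) in T.
    replace (q - 1 * w) with (q - w) in H by ring. lra.
  - pose proof (signed_alignment u s sigma false Hu Hs N) as H. simpl sgn in H.
    fold q w q_sigma in H. rewrite (Rabs_left q_sigma) by lra.
    pose proof (Rabs_triang_inv2 q (- w)) as T.
    rewrite Rabs_Ropp, (Rabs_pos_eq w Hw) in T.
    replace (q - -1 * w) with (q - - w) in H by ring. lra.
Qed.

Lemma supnorm_exists (z : nat -> R) (B : R) :
  (forall n, Rabs (z n) <= B) -> {s : R | is_supnorm z s}.
Proof.
  intro Hz. apply completeness.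
  - exists B; intros r [n ->]; apply Hz.
  - exists (Rabs (z O)); eauto.
Qed.

Lemma bounded_combination (x z : nat -> R) (a b : R) :
  bounded_seq x -> bounded_seq z -> bounded_seq (fun n => a * x n + b * z n).
Proof.
  intros [Mx Hx] [Mz Hz]. exists (Rabs a * Mx + Rabs b * Mz). intro n.
  eapply Rle_trans; [apply Rabs_triang|]. rewrite !Rabs_mult.
  apply Rplus_le_compat; apply Rmult_le_compat_l; auto using Rabs_pos.
Qed.

Definition xseq (n : nat) : R :=
  2 + series (fun j => rademacher j n) (fun j => rademacher_abs j n).

Lemma xseq_approx (N n : nat) :
  Rabs (xseq n - (2 + psum (fun j => 1 * rademacher j n) N)) <= tail N.
Proof.
  rewrite (psum_ext _ (fun j => rademacher j n)) by (intros; ring).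
  unfold xseq. replace (2 + _ - _) with
    (series (fun j => rademacher j n) (fun j => rademacher_abs j n)
     - psum (fun j => rademacher j n) N) by ring.
  apply series_approx.
Qed.

Lemma xseq_near_2 (n : nat) : Rabs (xseq n - 2) <= /3.
Proof.
  pose proof (xseq_approx 0 n) as H; simpl in H.
  rewrite tail0, Rplus_0_r in H; exact H.
Qed.

Lemma xseq_bounded : bounded_seq xseq.
Proof.
  exists (7/3). intro n. pose proof (xseq_near_2 n) as H.
  apply Rabs_le_iff in H; apply Rabs_le_iff; lra.
Qed.

Definition one : nat -> R := fun _ => 1.

Lemma one_bounded : bounded_seq one.
Proof. exists 1; intro n; unfold one; rewrite Rabs_R1; lra. Qed.

Section LinearIsometry.

Variable phi : (nat -> R) -> (nat -> R).
Hypothesis phi_linear : linear_on_linf phi.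
Hypothesis phi_isometry : isometry_on_linf phi.

Lemma isometry_upper (z : nat -> R) (B : R) :
  (forall n, Rabs (z n) <= B) -> forall k, Rabs (phi z k) <= B.
Proof.
  intros Hz k. destruct (supnorm_exists z B Hz) as [s Hs].
  destruct (phi_isometry z (ex_intro _ B Hz) s Hs) as [Hub _].
  destruct Hs as [_ Hlub].
  assert (s <= B) by (apply Hlub; intros r [n ->]; apply Hz).
  assert (Rabs (phi z k) <= s) by (apply Hub; eauto). lra.
Qed.

Lemma isometry_lower (z : nat -> R) (B : R) : bounded_seq z ->
  (forall k, Rabs (phi z k) <= B) -> forall n, Rabs (z n) <= B.
Proof.
  intros [M Hz] Hphi n. destruct (supnorm_exists z M Hz) as [s Hs].
  destruct (phi_isometry z (ex_intro _ M Hz) s Hs) as [_ Hlub].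
  destruct Hs as [Hub _].
  assert (s <= B) by (apply Hlub; intros r [k ->]; apply Hphi).
  assert (Rabs (z n) <= s) by (apply Hub; eauto). lra.
Qed.

Lemma isometry_attains (z : nat -> R) (B d : R) (n0 : nat) :
  (forall n, Rabs (z n) <= B) -> Rabs (z n0) = B -> 0 < d ->
  exists k, B - d < Rabs (phi z k).
Proof.
  intros Hz Hn0 Hd. apply NNPP; intro Hnone.
  assert (Hphi : forall k, Rabs (phi z k) <= B - d)
    by (intro k; apply Rnot_lt_le; intro Hk; apply Hnone; eauto).
  pose proof (isometry_lower z (B - d) (ex_intro _ B Hz) Hphi n0). lra.
Qed.

Lemma linear_combination (g : nat -> nat -> R) (b : nat -> R) :
  (forall j n, Rabs (g j n) <= 1) -> forall N,
  bounded_seq (fun n => 2 + psum (fun j => b j * g j n) N) /\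
  phi (fun n => 2 + psum (fun j => b j * g j n) N)
    = (fun k => 2 * phi one k + psum (fun j => b j * phi (g j) k) N).
Proof.
  destruct phi_linear as [_ Hlin]. intros Hg N.
  assert (Hgb : forall j, bounded_seq (g j)) by (intro j; exists 1; apply Hg).
  induction N as [|N [Hbnd IH]]; simpl.
  - replace (fun _ : nat => 2 + 0) with (fun n => 2 * one n + 0 * one n)
      by (apply functional_extensionality; intro; unfold one; ring).
    split; [apply bounded_combination; apply one_bounded|].
    rewrite Hlin by apply one_bounded.
    apply functional_extensionality; intro; ring.
  - set (z := fun n => 2 + psum (fun j => b j * g j n) N) in *.
    replace (fun n => 2 + (psum (fun j => b j * g j n) N + c N * (b N * g N n)))
      with (fun n => 1 * z n + (c N * b N) * g N n)
      by (apply functional_extensionality; intro; unfold z; ring).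
    split; [apply bounded_combination; auto|].
    rewrite Hlin, IH by auto.
    apply functional_extensionality; intro; ring.
Qed.

Lemma image_of_xseq (N k : nat) :
  Rabs (phi xseq k - (2 * phi one k + psum (fun j => phi (rademacher j) k) N))
    <= tail N.
Proof.
  destruct phi_linear as [_ Hlin].
  destruct (linear_combination rademacher (fun _ => 1) rademacher_abs N)
    as [Hbounded Hphi_sum].
  assert (Hdiff : forall n, Rabs (1 * xseq n
      + -1 * (2 + psum (fun j => 1 * rademacher j n) N)) <= tail N).
  { intro n. eapply Rle_trans; [|apply (xseq_approx N n)]. right; f_equal; ring. }
  pose proof (isometry_upper _ (tail N) Hdiff k) as H.
  rewrite Hlin, Hphi_sum in H by (exact xseq_bounded || exact Hbounded).
  rewrite (psum_ext (fun j => 1 * phi (rademacher j) k) (fun j => phi (rademacher j) k))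
    in H by (intros; ring).
  eapply Rle_trans; [|exact H]. right; f_equal; ring.
Qed.

(* The isometry makes |phi (signed_sum sigma N)| nearly peak N at
   some k, and alignment transfers this to |phi x k|. *)
Lemma levels (sigma : nat -> bool) (V : R) :
  (forall N, Rabs (V - (2 + psum (fun j => sgn (sigma j)) N)) <= tail N) ->
  forall N, exists k, Rabs (Rabs (phi xseq k) - V) < 3 * tail N.
Proof.
  intros HV N.
  destruct (signed_sum_peak sigma N) as [n0 Hn0].
  destruct (isometry_attains _ (peak N) (tail N) n0 (signed_sum_bound sigma N) Hn0
    (tail_pos N)) as [k Hk].
  exists k.
  set (u := phi one k). set (s := fun j => phi (rademacher j) k).
  assert (Hu : Rabs u <= 1)
    by (apply isometry_upper; intro; unfold one; rewrite Rabs_R1; lra).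
  assert (Hs : forall j, Rabs (s j) <= 1)
    by (intro j; apply isometry_upper, rademacher_abs).
  destruct (linear_combination rademacher (fun j => sgn (sigma j)) rademacher_abs N)
    as [_ Hphi_sum].
  unfold signed_sum in Hk; rewrite Hphi_sum in Hk.
  change (2 * phi one k + psum (fun j => sgn (sigma j) * phi (rademacher j) k) N)
    with (2 * u + psum (fun j => sgn (sigma j) * s j) N) in Hk.
  pose proof (alignment u s sigma N Hu Hs) as Halign.
  pose proof (Rle_trans _ _ _ (Rabs_triang_inv2 _ _) (image_of_xseq N k)) as Hy.
  fold u s in Hy. pose proof (HV N) as Hw.
  apply Rabs_le_iff in Hy; apply Rabs_le_iff in Hw;
    apply Rabs_le_iff in Halign; apply Rabs_lt_iff. lra.
Qed.

Lemma far_levels (sigma : nat -> bool) (V : R) :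
  (forall N, Rabs (V - (2 + psum (fun j => sgn (sigma j)) N)) <= tail N) ->
  (forall k, c (2 * k + 1) / 2 <= Rabs (V - Rabs (phi xseq k))) ->
  forall M e, 0 < e -> exists n, (M <= n)%nat /\ Rabs (Rabs (phi xseq n) - V) < e.
Proof.
  intros HV Hgap M e He.
  set (d := Rmin e (c (2 * M + 1) / 2)).
  assert (Hd : 0 < d)
    by (apply Rmin_glb_lt; [exact He | pose proof (c_pos (2 * M + 1)); lra]).
  assert (Hde : d <= e) by apply Rmin_l.
  assert (HdM : d <= c (2 * M + 1) / 2) by apply Rmin_r.
  destruct (tail_small (d / 3) ltac:(lra)) as [N HN].
  destruct (levels sigma V HV N) as [k Hk].
  exists k; split; [|lra].
  destruct (Nat.le_gt_cases M k) as [|Hsmall]; [assumption|exfalso].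
  pose proof (Hgap k) as Hfar. rewrite Rabs_minus_sym in Hfar.
  pose proof (c_antitone (2 * k + 1) (2 * M + 1) ltac:(lia)). lra.
Qed.

End LinearIsometry.

Lemma acc_of_abs_levels (y : nat -> R) (V : R) : 0 <= V ->
  (forall M e, 0 < e -> exists n, (M <= n)%nat /\ Rabs (Rabs (y n) - V) < e) ->
  exists a, acc_point y a /\ Rabs a = V.
Proof.
  intros HV Hlev.
  destruct (classic (acc_point y V)) as [HA|HA];
    [exists V; split; [exact HA | apply Rabs_pos_eq, HV]|].
  exists (- V); split; [|rewrite Rabs_Ropp; apply Rabs_pos_eq, HV].
  apply not_all_ex_not in HA as [e1 HA]. apply imply_to_and in HA as [He1 HA].
  apply not_all_ex_not in HA as [N1 HA].
  intros e He N.
  destruct (Hlev (max N N1) (Rmin e e1) (Rmin_glb_lt _ _ _ He He1)) as [n [Hn Hclose]].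
  pose proof (Rmin_l e e1). pose proof (Rmin_r e e1).
  exists n; split; [lia|].
  destruct (Rle_dec 0 (y n)) as [Hpos|Hneg].
  - exfalso; apply HA; exists n; split; [lia|].
    rewrite (Rabs_pos_eq (y n) Hpos) in Hclose. lra.
  - rewrite (Rabs_left (y n)) in Hclose by lra.
    replace (y n - - V) with (- (- y n - V)) by ring. rewrite Rabs_Ropp. lra.
Qed.

Lemma countable_enumeration (A : R -> Prop) : at_most_countable A ->
  exists g : nat -> R, forall a, A a -> exists m, g m = a.
Proof.
  intros [f Hf].
  exists (fun m => epsilon (inhabits 0) (fun a => A a /\ f a = m)).
  intros a Ha. exists (f a).
  destruct (epsilon_spec (inhabits 0) (fun b => A b /\ f b = f a)
    (ex_intro _ a (conj Ha eq_refl))) as [Hb Hfb].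
  apply Hf; assumption.
Qed.

Definition interleave (g h : nat -> R) (i : nat) : R :=
  if Nat.even i then g (Nat.div2 i) else h (Nat.div2 i).

Lemma interleave_even (g h : nat -> R) (m : nat) : interleave g h (2 * m) = g m.
Proof. unfold interleave; rewrite Nat.even_even, Nat.div2_double; reflexivity. Qed.

Lemma interleave_odd (g h : nat -> R) (m : nat) : interleave g h (2 * m + 1) = h m.
Proof. unfold interleave; rewrite Nat.even_odd, Nat.div2_odd'; reflexivity. Qed.

Theorem proposition3p1 :
  ~ exists phi : (nat -> R) -> (nat -> R),
      linear_on_linf phi /\ isometry_on_linf phi /\
      (forall x, bounded_seq x ->
         in_L_countable (phi x) \/ phi x = (fun _ => 0)).
Proof.
  intros [phi [Hlin [Hiso Hvalues]]].
  destruct (Hvalues xseq xseq_bounded) as [Hcount | Hzero].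
  2: { assert (Hphi0 : forall k, Rabs (phi xseq k) <= 0)
         by (intro k; rewrite Hzero, Rabs_R0; lra).
       pose proof (isometry_lower phi Hiso xseq 0 xseq_bounded Hphi0 0) as H0.
       pose proof (xseq_near_2 0) as H2. apply Rabs_le_iff in H2.
       pose proof (Rabs_pos (xseq 0)). rewrite Rabs_pos_eq in H0 by lra. lra. }
  destruct (countable_enumeration _ Hcount) as [g Hg].
  set (t := interleave (fun m => Rabs (g m)) (fun k => Rabs (phi xseq k))).
  destruct (avoiding_point t) as [sigma [V [HV Hgap]]].
  assert (HV_pos : 0 <= V).
  { pose proof (HV 0%nat) as H; simpl in H; rewrite tail0 in H.
    apply Rabs_le_iff in H; lra. }
  assert (Hodd : forall k, c (2 * k + 1) / 2 <= Rabs (V - Rabs (phi xseq k))).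
  { intro k. pose proof (Hgap (2 * k + 1)%nat) as H.
    unfold t in H; rewrite interleave_odd in H; exact H. }
  (* V or -V is an accumulation point, hence V occurs in t: impossible *)
  destruct (acc_of_abs_levels _ V HV_pos (far_levels phi Hlin Hiso sigma V HV Hodd))
    as [a [Ha Ha_abs]].
  destruct (Hg a Ha) as [m Hm].
  pose proof (Hgap (2 * m)%nat) as Hfar.
  unfold t in Hfar; rewrite interleave_even, Hm, Ha_abs, Rminus_diag, Rabs_R0 in Hfar.
  pose proof (c_pos (2 * m)). lra.
Qed.
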